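(* Assume $R_\phi(\mathbf{w})$ has a unique minimizer $\mathbf{w}_{\mathrm{sup}}$ and that $\phi$ is decreasing, i.e. $\phi(a)\ge\phi(b)$ whenever $a\le b$. Then there is no $\mathbf{w}_{\mathrm{semi}}\in\mathbb{R}^d$ that satisfies both of the following: (i) $\max_{\mathbf{q}\in\{0,1\}^U} D_\phi(\mathbf{w}_{\mathrm{semi}},\mathbf{q})\le 0$; (ii) there exists $\mathbf{q}^\ast\in\{0,1\}^U$ with $D_\phi(\mathbf{w}_{\mathrm{semi}},\mathbf{q}^\ast)<0$.
   Context: Fix integers $L,U,d\ge 1$. Let $\mathbf{X}\in\mathbb{R}^{L\times d}$ be a matrix whose rows $\mathbf{x}_1^\top,\dots,\mathbf{x}_L^\top$ are the labeled objects, with labels $\mathbf{y}\in\{-1,+1\}^L$. Let $\mathbf{X}_{\mathrm{u}}\in\mathbb{R}^{U\times d}$ be a matrix whose rows $\mathbf{x}_{\mathrm{u},1}^\top,\dots,\mathbf{x}_{\mathrm{u},U}^\top$ are the unlabeled objects. Let $\phi:\mathbb{R}\to\mathbb{R}$ be a loss function, $\Omega:\mathbb{R}^d\to\mathbb{R}$ a convex function and $\lambda\ge 0$. The supervised risk is $R_\phi(\mathbf{w})=\sum_{i=1}^L\phi(y_i\mathbf{x}_i^\top\mathbf{w})+\lambda\Omega(\mathbf{w})$. For responsibilities $\mathbf{q}\in[0,1]^U$ the semi-supervised risk is $R^{\mathrm{semi}}_\phi(\mathbf{w},\mathbf{q})=R_\phi(\mathbf{w})+\sum_{j=1}^U\big[q_j\phi(\mathbf{x}_{\mathrm{u},j}^\top\mathbf{w})+(1-q_j)\phi(-\mathbf{x}_{\mathrm{u},j}^\top\mathbf{w})\big]$.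 Given the minimizer $\mathbf{w}_{\mathrm{sup}}$ of $R_\phi$, define $D_\phi(\mathbf{w},\mathbf{q})=R^{\mathrm{semi}}_\phi(\mathbf{w},\mathbf{q})-R^{\mathrm{semi}}_\phi(\mathbf{w}_{\mathrm{sup}},\mathbf{q})$. *)

From HB Require Import structures.
From mathcomp Require Import all_boot all_order all_algebra.
Set Implicit Arguments. Unset Strict Implicit. Unset Printing Implicit Defensive.
Import Order.TTheory GRing.Theory Num.Theory.
Local Open Scope ring_scope.

Definition convex_fun (R : realFieldType) (d : nat) (Omega : 'cV[R]_d -> R) : Prop :=
  forall (u v : 'cV[R]_d) (t : R), 0 <= t -> t <= 1 ->
    Omega (t *: u + (1 - t) *: v) <= t * Omega u + (1 - t) * Omega v.

(* Supervised risk R_phi(w) = sum_i phi(y_i x_i^T w) + lambda Omega(w);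
   x_i^T w is the i-th entry of X w. *)
Definition sup_risk (R : realFieldType) (L d : nat) (phi : R -> R)
  (Omega : 'cV[R]_d -> R) (lam : R) (X : 'M[R]_(L, d)) (y : 'I_L -> R)
  (w : 'cV[R]_d) : R :=
  \sum_(i < L) phi (y i * (X *m w) i 0) + lam * Omega w.

Definition semi_risk (R : realFieldType) (L U d : nat) (phi : R -> R)
  (Omega : 'cV[R]_d -> R) (lam : R) (X : 'M[R]_(L, d)) (y : 'I_L -> R)
  (Xu : 'M[R]_(U, d)) (w : 'cV[R]_d) (q : 'I_U -> R) : R :=
  sup_risk phi Omega lam X y w
  + \sum_(j < U) (q j * phi ((Xu *m w) j 0) + (1 - q j) * phi (- (Xu *m w) j 0)).

Definition Dphi (R : realFieldType) (L U d : nat) (phi : R -> R)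
  (Omega : 'cV[R]_d -> R) (lam : R) (X : 'M[R]_(L, d)) (y : 'I_L -> R)
  (Xu : 'M[R]_(U, d)) (wsup w : 'cV[R]_d) (q : 'I_U -> R) : R :=
  semi_risk phi Omega lam X y Xu w q - semi_risk phi Omega lam X y Xu wsup q.

Definition binary_resp (R : realFieldType) (U : nat) (q : 'I_U -> R) : Prop :=
  forall j, q j = 0 \/ q j = 1.

(* If w_semi = w_sup then D_phi(w_semi, q) = 0 for every q, contradicting (ii).
   Otherwise uniqueness of the minimizer makes the supervised risk strictly
   larger at w_semi, and choosing q_j = 1 exactly when the score of the j-th
   unlabeled object does not increase from w_sup to w_semi makes, since phi is
   decreasing, every unlabeled loss at least as large at w_semi; hence
   D_phi(w_semi, q) > 0, contradicting (i).  Convexity of Omega, the sign of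
   lambda and the label values play no role. *)
From HB Require Import structures.
From mathcomp Require Import all_boot all_order all_algebra.
Set Implicit Arguments. Unset Strict Implicit. Unset Printing Implicit Defensive.
Import Order.TTheory GRing.Theory Num.Theory.
Local Open Scope ring_scope.

Lemma unique_argmin_lt (T : Type) (R : numDomainType) (f : T -> R) (x0 : T) :
  (forall x, f x0 <= f x) ->
  (forall x', (forall x, f x' <= f x) -> x' = x0) ->
  forall x, x <> x0 -> f x0 < f x.
Proof.
move=> fmin funiq x neq_x; rewrite lt_neqAle fmin andbT.
by apply: contra_notN neq_x => /eqP eq_fx; apply: funiq => z; rewrite -eq_fx.
Qed.

Section WorstResponsibilities.

Variables (R : realFieldType) (phi : R -> R).
Hypothesis phi_decr : forall a b : R, a <= b -> phi b <= phi a.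

Definition worst_resp (U : nat) (a b : 'cV[R]_U) (j : 'I_U) : R :=
  if a j 0 <= b j 0 then 1 else 0.

Lemma worst_resp_binary (U : nat) (a b : 'cV[R]_U) : binary_resp (worst_resp a b).
Proof. by move=> j; rewrite /worst_resp; case: ifP; [right | left]. Qed.

Lemma worst_resp_loss_le (U : nat) (a b : 'cV[R]_U) :
  \sum_(j < U) (worst_resp a b j * phi (b j 0) + (1 - worst_resp a b j) * phi (- b j 0))
  <= \sum_(j < U) (worst_resp a b j * phi (a j 0) + (1 - worst_resp a b j) * phi (- a j 0)).
Proof.
apply: ler_sum => j _; rewrite /worst_resp; case: ifP => [le_ab | /negbT lt_ba].
- by rewrite subrr !mul0r !addr0 !mul1r phi_decr.
- by rewrite subr0 !mul0r !add0r !mul1r phi_decr // lerN2 ltW // ltNge.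
Qed.

Lemma Dphi_worst_resp_gt0 (L U d : nat) (Omega : 'cV[R]_d -> R) (lam : R)
    (X : 'M[R]_(L, d)) (y : 'I_L -> R) (Xu : 'M[R]_(U, d)) (wsup w : 'cV[R]_d) :
  sup_risk phi Omega lam X y wsup < sup_risk phi Omega lam X y w ->
  0 < Dphi phi Omega lam X y Xu wsup w (worst_resp (Xu *m w) (Xu *m wsup)).
Proof.
by move=> lt_risk; rewrite subr_gt0; apply: ltr_leD => //; exact: worst_resp_loss_le.
Qed.

End WorstResponsibilities.

Theorem theorem1 (R : realFieldType) (L U d : nat)
  (hL : (1 <= L)%N) (hU : (1 <= U)%N) (hd : (1 <= d)%N)
  (X : 'M[R]_(L, d)) (y : 'I_L -> R) (hy : forall i, y i = 1 \/ y i = -1)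
  (Xu : 'M[R]_(U, d)) (phi : R -> R) (Omega : 'cV[R]_d -> R)
  (hOmega : convex_fun Omega) (lam : R) (hlam : 0 <= lam)
  (wsup : 'cV[R]_d)
  (hmin : forall w, sup_risk phi Omega lam X y wsup <= sup_risk phi Omega lam X y w)
  (huniq : forall w', (forall w, sup_risk phi Omega lam X y w' <= sup_risk phi Omega lam X y w) ->
                      w' = wsup)
  (hdec : forall a b : R, a <= b -> phi b <= phi a) :
  ~ (exists wsemi : 'cV[R]_d,
       (forall q : 'I_U -> R, binary_resp q -> Dphi phi Omega lam X y Xu wsup wsemi q <= 0) /\
       (exists qs : 'I_U -> R, binary_resp qs /\ Dphi phi Omega lam X y Xu wsup wsemi qs < 0)).
Proof.
move=> [w [D_le0 [qs [_ D_lt0]]]].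
have neq_w : w <> wsup by move=> eq_w; move: D_lt0; rewrite eq_w /Dphi subrr ltxx.
have lt_risk := unique_argmin_lt hmin huniq neq_w.
have := D_le0 _ (worst_resp_binary (Xu *m w) (Xu *m wsup)).
by rewrite leNgt (Dphi_worst_resp_gt0 hdec Xu lt_risk).
Qed.
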